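(* Fix one of the types A, B, D below with its group $G$ of orthogonal transformations of $\mathbb{R}^n$ and its domain $C\subset\mathbb{R}^n$. Let $(\xi_1,\dots,\xi_n)$ be a tuple of random vectors in $\mathbb{R}^d$ satisfying all assumptions of that type except possibly the general position assumption, with associated convex hull $H_{n,d}$, and let $A$ be the random $d\times n$ matrix with columns $\xi_1,\dots,\xi_n$, viewed as a linear map $\mathbb{R}^n\to\mathbb{R}^d$. Then for every $g\in G$, $$\mathbb{P}[0\in H_{n,d}]=\mathbb{P}[\ker A\cap(g\bar C)\neq\{0\}].$$
   Context: $e_1,\dots,e_n$ is the standard basis of $\mathbb{R}^n$ and $\bar C$ the closure of $C$. For a tuple $(\xi_1,\dots,\xi_n)$ of random vectors in $\mathbb{R}^d$, put $S_k=\xi_1+\dots+\xi_k$ and $S_n^*=S_{n-1}-\xi_n$. Type A: $n\ge d+1$; the tuple is exchangeable ($(\xi_1,\dots,\xi_n)\stackrel{d}{=}(\xi_{\sigma(1)},\dots,\xi_{\sigma(n)})$ for all permutations $\sigma$); $S_n=0$ a.s.; general position assumption: any $d$ vectors among $S_1,\dots,S_{n-1}$ are linearly independent a.s.; $H_{n,d}=\mathrm{Conv}(S_1,\dots,S_{n-1})$; $G$ consists of the maps $g_\sigma(e_k)=e_{\sigma(k)}$, $\sigma$ a permutation of $\{1,\dots,n\}$; $C=\{x\in\mathbb{R}^n:x_1<\dots<x_n,\ x_1+\dots+x_n=0\}$. Type B: $n\ge d$; $(\xi_1,\dots,\xi_n)\stackrel{d}{=}(\varepsilon_1\xi_{\sigma(1)},\dots,\varepsilon_n\xi_{\sigma(n)})$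 for all permutations $\sigma$ and all signs $\varepsilon_i\in\{-1,1\}$; general position assumption: any $d$ vectors among $S_1,\dots,S_n$ are linearly independent a.s.; $H_{n,d}=\mathrm{Conv}(S_1,\dots,S_n)$; $G$ consists of the maps $g_{\sigma,\varepsilon}(e_k)=\varepsilon_ke_{\sigma(k)}$ with $\sigma$ a permutation and $\varepsilon\in\{-1,1\}^n$; $C=\{x:0<x_1<\dots<x_n\}$. Type D: $n\ge\max\{2,d\}$; the same invariance as type B but only for signs with $\varepsilon_1\cdots\varepsilon_n=1$; general position assumption: any $d$ vectors from either collection $S_1,\dots,S_n$ or $S_1,\dots,S_{n-1},S_n^*$ are linearly independent a.s.; $H_{n,d}=\mathrm{Conv}(S_1,\dots,S_n,S_n^* )$; $G$ consists of the maps $g_{\sigma,\varepsilon}$ with $\varepsilon_1\cdots\varepsilon_n=1$; $C=\{x:0<|x_1|<x_2<\dots<x_n\}$. *)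

From HB Require Import structures.
From mathcomp Require Import all_boot all_order all_algebra all_fingroup.
From mathcomp Require Import all_classical all_reals all_analysis.
Set Implicit Arguments. Unset Strict Implicit. Unset Printing Implicit Defensive.
Import Order.TTheory GRing.Theory Num.Theory.
Import numFieldNormedType.Exports.
Local Open Scope classical_set_scope.
Local Open Scope ring_scope.

Inductive rtype := TypeA | TypeB | TypeD.

Section Defs.
Variable R : realType.

(* The product (= Borel) sigma-algebra on 'M[R]_(d,n), generated by the
   coordinate maps M |-> M i j. *)
Definition mx_gen (d n : nat) : set (set 'M[R]_(d, n)) :=
  [set B | exists (i : 'I_d) (j : 'I_n) (A : set R),
     measurable A /\ B = [set M : 'M[R]_(d, n) | A (M i j)]].

Definition mx_measurable (d n : nat) (B : set 'M[R]_(d, n)) : Prop :=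
  <<s @mx_gen d n >> B.

(* X : Omega -> 'M_(d,n) is a random matrix, i.e. the tuple of its columns
   is a tuple of random vectors in R^d. *)
Definition random_mx {dm} {Omega : measurableType dm} (d n : nat)
  (X : Omega -> 'M[R]_(d, n)) : Prop :=
  forall B, mx_measurable B -> measurable (X @^-1` B).

Definition eq_in_law {dm} {Omega : measurableType dm} (P : probability Omega R)
  (d n : nat) (X Y : Omega -> 'M[R]_(d, n)) : Prop :=
  forall B, mx_measurable B -> P (X @^-1` B) = P (Y @^-1` B).

(* the matrix with columns eps_k xi_{sigma(k)}, where xi_k = col k M *)
Definition perm_sign_cols (d n : nat) (s : 'S_n) (eps : 'I_n -> bool)
  (M : 'M[R]_(d, n)) : 'M[R]_(d, n) :=
  \matrix_(i < d, k < n) ((-1) ^+ eps k * M i (s k)).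

Definition signs_ok (t : rtype) (n : nat) (eps : 'I_n -> bool) : bool :=
  match t with
  | TypeA => [forall k, ~~ eps k]
  | TypeB => true
  | TypeD => ~~ odd (\sum_(k < n) (eps k : nat))  (* eps_1 ... eps_n = 1 *)
  end.

(* g_{sigma,eps} as a linear map on column vectors: g(e_k) = eps_k e_{sigma(k)},
   i.e. (g x)_{sigma(k)} = eps_k x_k. *)
Definition g_act (n : nat) (s : 'S_n) (eps : 'I_n -> bool)
  (x : 'cV[R]_n) : 'cV[R]_n :=
  \col_(j < n) ((-1) ^+ eps (s^-1 j)%g * x (s^-1 j)%g ord0).

Definition coneC (t : rtype) (n : nat) : set 'cV[R]_n :=
  match t with
  | TypeA => [set x | (forall i j : 'I_n, (i < j)%N -> x i ord0 < x j ord0)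
                      /\ \sum_(i < n) x i ord0 = 0]
  | TypeB => [set x | (forall i : 'I_n, (nat_of_ord i == 0)%N -> 0 < x i ord0)
                      /\ (forall i j : 'I_n, (i < j)%N -> x i ord0 < x j ord0)]
  | TypeD => [set x | (forall i : 'I_n, (nat_of_ord i == 0)%N -> 0 < `|x i ord0|)
                      /\ (forall i j : 'I_n, (i < j)%N ->
                            (if (nat_of_ord i == 0)%N then `|x i ord0| else x i ord0)
                              < x j ord0)]
  end.

(* S_k = xi_1 + ... + xi_k (k = 0..n), xi_i the i-th column of M *)
Definition psum (d n : nat) (M : 'M[R]_(d, n)) (k : nat) : 'cV[R]_d :=
  \sum_(i < n | (i < k)%N) col i M.

(* S_n^* = S_{n-1} - xi_n *)
Definition psum_star (d n : nat) (M : 'M[R]_(d, n)) : 'cV[R]_d :=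
  psum M n.-1 - \sum_(i < n | (nat_of_ord i == n.-1)%N) col i M.

Definition hull_points (t : rtype) (d n : nat) (M : 'M[R]_(d, n))
  : seq 'cV[R]_d :=
  match t with
  | TypeA => [seq psum M k | k <- iota 1 n.-1]
  | TypeB => [seq psum M k | k <- iota 1 n]
  | TypeD => rcons [seq psum M k | k <- iota 1 n] (psum_star M)
  end.

Definition in_conv_hull (d : nat) (s : seq 'cV[R]_d) (x : 'cV[R]_d) : Prop :=
  exists l : 'I_(size s) -> R,
    (forall i, 0 <= l i) /\ \sum_i l i = 1 /\
    \sum_i l i *: nth 0 s i = x.

Definition type_assumptions {dm} {Omega : measurableType dm}
  (P : probability Omega R) (t : rtype) (d n : nat)
  (X : Omega -> 'M[R]_(d, n)) : Prop :=
  match t with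
  | TypeA => (d.+1 <= n)%N
             /\ (forall s : 'S_n, eq_in_law P X (perm_sign_cols s (fun _ => false) \o X))
             /\ {ae P, forall w, psum (X w) n = 0}
  | TypeB => (d <= n)%N
             /\ (forall (s : 'S_n) (eps : 'I_n -> bool),
                   eq_in_law P X (perm_sign_cols s eps \o X))
  | TypeD => (maxn 2 d <= n)%N
             /\ (forall (s : 'S_n) (eps : 'I_n -> bool), signs_ok TypeD eps ->
                   eq_in_law P X (perm_sign_cols s eps \o X))
  end.

End Defs.

From HB Require Import structures.
From mathcomp Require Import all_boot all_order all_algebra all_fingroup.
From mathcomp Require Import all_classical all_reals all_analysis.
From mathcomp Require Import measurable_realfun ring lra zify.
Import Order.TTheory GRing.Theory Num.Theory.
Import numFieldNormedType.Exports.
Local Open Scope classical_set_scope.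
Local Open Scope ring_scope.
Set Implicit Arguments. Unset Strict Implicit. Unset Printing Implicit Defensive.

(* Since [A *m g x = A' *m x] for the matrix [A'] of signed permuted columns, which
   has the law of [A], the kernel event for [g] has the probability of the kernel
   event for [g = 1].  The closure of [C] is the conic hull of finitely many rays
   [r_i] on which a linear functional equals [1]; hence [ker N] meets it
   nontrivially iff [0] lies in the convex hull of the points [N r_i].  Reversing
   the order of the columns (again law-preserving) turns these points into the
   partial sums spanning [H_{n,d}]; in type A only up to multiples of [S_n], which
   vanishes a.s.  Measurability of "[0] is in the convex hull of the [M v_i]"
   follows by approximating convex weights by rational ones. *)

Section Topology.
Variable R : realType.

Lemma lipschitz_continuous (V W : normedModType R) (f : V -> W) (K : R) :
  (forall x y, `|f x - f y| <= K * `|x - y|) -> continuous f.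
Proof.
move=> lip x; apply/(@cvgrPdist_lt _ _ _ _ (nbhs_filter x)) => e e0.
have K1 : 0 < `|K| + 1 by rewrite ltr_wpDl.
apply/nbhs_ballP; exists (e / (`|K| + 1)) => /=; first by rewrite divr_gt0.
move=> y; rewrite -ball_normE /= => xy.
apply: le_lt_trans (lip x y) _; apply: le_lt_trans (ler_norm _) _.
rewrite normrM normr_id.
apply: le_lt_trans (_ : `|K| * (e / (`|K| + 1)) < e).
  by rewrite ler_wpM2l // ltW.
by rewrite mulrA ltr_pdivrMr // mulrDr mulr1 mulrC ltrDl.
Qed.

Lemma closure_ge0 (T : topologicalType) (C : set T) (phi : T -> R) :
  continuous phi -> (forall y, C y -> 0 <= phi y) ->
  forall x, closure C x -> 0 <= phi x.
Proof.
move=> cphi C0; have cl : closed (phi @^-1` [set r | 0 <= r]).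
  by apply: (continuous_closedP phi).1 => //; exact: closed_ge.
have sub : C `<=` phi @^-1` [set r | 0 <= r] by move=> y /C0.
by move=> x /(closureS sub); rewrite -(closure_id _).1.
Qed.

Lemma ler_mx_norm_entry m n (M : 'M[R]_(m, n)) i j : `|M i j| <= `|M|.
Proof.
by rewrite [`|M|]mx_normrE; apply: (le_bigmax _ (fun ij => `|M ij.1 ij.2|) (i, j)).
Qed.

Lemma mx_norm_le m n (M : 'M[R]_(m, n)) c :
  0 <= c -> (forall i j, `|M i j| <= c) -> `|M| <= c.
Proof. by move=> c0 h; rewrite [`|M|]mx_normrE; apply: bigmax_le => // ij _. Qed.

Lemma mx_norm_lt m n (M : 'M[R]_(m, n)) c :
  0 < c -> (forall i j, `|M i j| < c) -> `|M| < c.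
Proof. by move=> c0 h; rewrite [`|M|]mx_normrE; apply: bigmax_lt => // ij _. Qed.

Lemma continuous_mx_entry m n (i : 'I_m) (j : 'I_n) :
  continuous (fun M : 'M[R]_(m, n) => M i j).
Proof.
apply: (@lipschitz_continuous _ _ _ 1) => M N; rewrite mul1r.
by have := ler_mx_norm_entry (M - N) i j; rewrite !mxE.
Qed.

Lemma continuous_mx_sum m n : continuous (fun M : 'M[R]_(m, n) => \sum_i \sum_j M i j).
Proof.
apply: (@lipschitz_continuous _ _ _ (m * n)%:R) => M N.
rewrite -sumrB; apply: le_trans (ler_norm_sum _ _ _) _.
rewrite -[m in (m * _)%:R]card_ord natrM -mulrA mulr_natl -sumr_const.
apply: ler_sum => i _; rewrite -sumrB; apply: le_trans (ler_norm_sum _ _ _) _.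
rewrite -[n in n%:R]card_ord mulr_natl -sumr_const; apply: ler_sum => j _.
by have := ler_mx_norm_entry (M - N) i j; rewrite !mxE.
Qed.

Lemma continuous_rV_sum n : continuous (fun x : 'rV[R]_n => \sum_j x ord0 j).
Proof. by have := @continuous_mx_sum 1 n; under eq_fun do rewrite big_ord1. Qed.

Lemma continuous_cV_sum n : continuous (fun x : 'cV[R]_n => \sum_i x i ord0).
Proof.
by have := @continuous_mx_sum n 1; under eq_fun do under eq_bigr do rewrite big_ord1.
Qed.

End Topology.

Section ZeroInConv.
Variable R : realType.

Definition zero_in_conv m d (p : 'I_m -> 'cV[R]_d) : Prop :=
  exists l : 'I_m -> R,
    (forall i, 0 <= l i) /\ \sum_i l i = 1 /\ \sum_i l i *: p i = 0.

Lemma zero_in_conv_ext m d (p q : 'I_m -> 'cV[R]_d) :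
  p =1 q -> zero_in_conv p <-> zero_in_conv q.
Proof.
by move=> pq; split=> -[l [l0 [l1 lp]]]; exists l; do 2!split=> //;
  rewrite -[RHS]lp; apply: eq_bigr => i _; rewrite pq.
Qed.

Definition simplex m : set 'rV[R]_m :=
  [set v | (forall i, 0 <= v ord0 i) /\ \sum_i v ord0 i = 1].
Arguments simplex : clear implicits.

Lemma compact_simplex m : compact (simplex m).
Proof.
apply: bounded_closed_compact.
  exists 1; split; first by rewrite realE ler01.
  move=> M M1 v [v0 v1]; apply: mx_norm_le => [|i j]; first exact: le_trans (ltW M1).
  rewrite (ord1 i) ger0_norm // (le_trans _ (ltW M1)) // -v1.
  by rewrite (bigD1 j) //= lerDl sumr_ge0.
move=> v cv; split=> [i|].
  apply: (closure_ge0 (phi := fun w : 'rV[R]_m => w ord0 i)) cv => [|w []//].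
  exact: continuous_mx_entry.
apply/eqP; rewrite eq_le -subr_ge0 -[X in _ && X]subr_ge0; apply/andP; split.
  apply: (closure_ge0 (phi := fun w : 'rV[R]_m => 1 - \sum_i w ord0 i)) cv => [|w [_ ->]].
    by move=> w; apply: continuousB; [exact: cst_continuous|exact: continuous_rV_sum].
  by rewrite subrr.
apply: (closure_ge0 (phi := fun w : 'rV[R]_m => \sum_i w ord0 i - 1)) cv => [|w [_ ->]].
  by move=> w; apply: continuousB; [exact: continuous_rV_sum|exact: cst_continuous].
by rewrite subrr.
Qed.

Lemma zero_notin_conv_dist m d (p : 'I_m -> 'cV[R]_d) : ~ zero_in_conv p ->
  exists2 e, 0 < e & forall l : 'I_m -> R, (forall i, 0 <= l i) ->
    \sum_i l i = 1 -> e <= `|\sum_i l i *: p i|.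
Proof.
move=> np; pose F (v : 'rV[R]_m) := \sum_i v ord0 i *: p i.
have cF : continuous F.
  apply: (@lipschitz_continuous _ _ _ _ (\sum_i `|p i|)) => u w.
  rewrite /F -sumrB mulr_suml; apply: le_trans (ler_norm_sum _ _ _) (ler_sum _ _) => i _.
  rewrite -scalerBl normrZ mulrC ler_wpM2l //.
  by have := ler_mx_norm_entry (u - w) ord0 i; rewrite !mxE.
have kFS : compact (F @` simplex m) :=
  continuous_compact (continuous_subspaceT cF) (@compact_simplex m).
have cFS : closed (F @` simplex m) := compact_closed (@norm_hausdorff _ _) kFS.
have [e e0 eFS] : exists2 e, 0 < e & forall v, simplex m v -> ~ ball 0 e (F v).
  apply: contrapT => /= noe; apply: np.
  have [v [v0 v1] Fv0] : (F @` simplex m) 0.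
    rewrite [X in X 0](closure_id _).1 // => B /nbhs_ballP [e e0 eB]; apply: contrapT => nB.
    apply: noe; exists e => // v Sv ev; apply: nB; exists (F v); split; last exact: eB.
    by exists v.
  by exists (fun i => v ord0 i).
exists e => // l l0 l1; rewrite leNgt; apply/negP => le.
apply: (eFS (\row_i l i)); first by split=> [i|]; rewrite ?mxE //; under eq_bigr do rewrite mxE.
by rewrite -ball_normE /= sub0r normrN /F; under eq_bigr do rewrite mxE.
Qed.

End ZeroInConv.

Lemma measurable_forall_ord d (T : measurableType d) k (P : 'I_k -> set T) :
  (forall r, measurable (P r)) -> measurable [set x | forall r, P r x].
Proof.
move=> mP; rewrite (_ : [set x | forall r, P r x] =
  \bigcap_j (if @insub _ (fun j => (j < k)%N) 'I_k j is Some r then P r else setT)).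
  by apply: bigcapT_measurable => j; case: insub.
apply/seteqP; split=> x /= Px; first by move=> j _; case: insub.
by move=> r; have := Px (val r) I; rewrite valK.
Qed.

Section ZeroInConvMeasurable.
Variable R : realType.

Lemma nat_weights_approx m (l : 'I_m -> R) (K : R) :
  (forall i, 0 <= l i) -> \sum_i l i = 1 ->
  exists a : 'I_m -> nat, exists N : R,
    K < (\sum_i a i)%:R /\ forall i, `|(a i)%:R - N * l i| <= 1.
Proof.
move=> l0 l1; pose N := (Num.truncn (m%:R + `|K|)).+1.
have NK : m%:R + `|K| < N%:R :> R := truncnS_gt _.
pose a i := Num.truncn (N%:R * l i).
have a_itv i : (a i)%:R <= N%:R * l i < (a i).+1%:R.
  by apply: truncn_itv; rewrite mulr_ge0.
exists a, N%:R; split=> [|i]; last first.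
  have /andP[ha1 ha2] := a_itv i; rewrite -natr1 in ha2.
  by rewrite distrC ger0_norm ?subr_ge0 //; lra.
have : N%:R - m%:R <= (\sum_i a i)%:R :> R.
  have -> : m%:R = \sum_(i < m) 1 :> R by rewrite sumr_const card_ord.
  rewrite lerBlDr natr_sum -big_split /=.
  have -> : N%:R = \sum_i N%:R * l i :> R by rewrite -mulr_sumr l1 mulr1.
  apply: ler_sum => i _.
  by have /andP[_ /ltW] := a_itv i; rewrite -natr1.
by move=> h; have := ler_norm K; lra.
Qed.

Variables d n m : nat.
Variable v : 'I_m -> 'cV[R]_n.
Local Notation T := (g_sigma_algebraType (@mx_gen R d n)).

Lemma measurable_row_dot_lt (r : 'I_d) (w : 'I_n -> R) c :
  measurable [set M : T | `|\sum_j w j * (M : 'M[R]_(d, n)) r j| < c].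
Proof.
have mf : measurable_fun [set: T] (fun M : T => \sum_j w j * (M : 'M[R]_(d, n)) r j).
  apply: measurable_sum => j; apply: measurable_funM; first exact: measurable_cst.
  by move=> _ Y mY; rewrite setTI; apply: sub_sigma_algebra; exists r, j, Y.
rewrite -[X in measurable X]setTI -/(_ @^-1` [set x : R | `|x| < c]).
apply: mf => //; rewrite (_ : [set x : R | `|x| < c] = `]-c, c[%classic).
  exact: measurable_itv.
by apply/seteqP; split=> x /=; rewrite in_itv /= ltr_norml.
Qed.

Definition nat_weights (k : nat) : 'I_m -> nat :=
  odflt [ffun=> 0%N] (unpickle k).

Definition approx_conv (q k : nat) : set 'M[R]_(d, n) :=
  [set M | (0 < \sum_i nat_weights k i)%N /\ forall r : 'I_d,
    `|\sum_i (nat_weights k i)%:R * (M *m v i) r ord0|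
      < (\sum_i nat_weights k i)%:R / q.+1%:R].

Lemma measurable_approx_conv q k : measurable (approx_conv q k : set T).
Proof.
rewrite /approx_conv; case: (ltnP 0 (\sum_i nat_weights k i)) => a0; last first.
  by rewrite (_ : [set M | _ /\ _] = set0) //; apply/seteqP; split=> M // [].
set a := nat_weights k.
rewrite (_ : [set M | _ /\ _] = [set M : T | forall r : 'I_d,
  `|\sum_j (\sum_i (a i)%:R * v i j ord0) * (M : 'M[R]_(d, n)) r j|
    < (\sum_i a i)%:R / q.+1%:R]).
  by apply: measurable_forall_ord => r; exact: measurable_row_dot_lt.
have sumE (M : 'M[R]_(d, n)) r : \sum_i (a i)%:R * (M *m v i) r ord0 =
    \sum_j (\sum_i (a i)%:R * v i j ord0) * M r j.
  under eq_bigr do rewrite mxE mulr_sumr.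
  rewrite exchange_big /=; apply: eq_bigr => j _; rewrite mulr_suml.
  by apply: eq_bigr => i _; rewrite mulrA mulrAC.
by apply/seteqP; split=> M /= => [[_ Ma] r|Ma]; [rewrite -sumE|split=> // r; rewrite sumE].
Qed.

Lemma zero_in_conv_approx (M : 'M[R]_(d, n)) q :
  zero_in_conv (fun i => M *m v i) -> exists k, approx_conv q k M.
Proof.
move=> [l [l0 [l1 lM]]]; set p := fun i => M *m v i.
pose B := \sum_i `|p i|; have B0 : 0 <= B by rewrite sumr_ge0.
have [a [N [aB aN]]] := nat_weights_approx (q.+1%:R * B) l0 l1.
exists (pickle [ffun i => a i]); rewrite /approx_conv /nat_weights pickleK /=.
under eq_bigr do rewrite ffunE; split=> [|r].
  by rewrite -(ltr0n R); apply: le_lt_trans aB; rewrite mulr_ge0.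
under eq_bigr do rewrite ffunE.
have lr : \sum_i l i * p i r ord0 = 0.
  transitivity ((\sum_i l i *: p i) r ord0); last by rewrite lM mxE.
  by rewrite summxE; apply: eq_bigr => i _; rewrite [RHS]mxE.
have -> : \sum_i (a i)%:R * p i r ord0 = \sum_i ((a i)%:R - N * l i) * p i r ord0.
  have : \sum_i ((a i)%:R - N * l i) * p i r ord0 =
      \sum_i (a i)%:R * p i r ord0 - N * \sum_i l i * p i r ord0.
    by rewrite mulr_sumr -sumrB; apply: eq_bigr => i _; ring.
  by rewrite lr mulr0 subr0.
apply: le_lt_trans (ler_norm_sum _ _ _) _; apply: (@le_lt_trans _ _ B).
  apply: ler_sum => i _; rewrite normrM -[`|p i|]mul1r.
  by apply: ler_pM => //; exact: ler_mx_norm_entry.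
by rewrite ltr_pdivlMr // mulrC.
Qed.

Lemma approx_zero_in_conv (M : 'M[R]_(d, n)) :
  (forall q, exists k, approx_conv q k M) -> zero_in_conv (fun i => M *m v i).
Proof.
move=> Mq; apply: contrapT => nc; have [e e0 eM] := zero_notin_conv_dist nc.
pose q := Num.truncn e^-1; have qe : e^-1 < q.+1%:R := truncnS_gt _.
have [k [a0 ak]] := Mq q; set s := \sum_i nat_weights k i in a0 ak.
have s0 : 0 < s%:R :> R by rewrite ltr0n.
pose l i := (nat_weights k i)%:R / s%:R : R.
have l0 i : 0 <= l i by rewrite divr_ge0 // ltW.
have l1 : \sum_i l i = 1 by rewrite -mulr_suml -natr_sum divff // gt_eqF.
have := eM l l0 l1; rewrite leNgt => /negP; apply; apply: mx_norm_lt => // r j.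
rewrite (ord1 j) summxE; under eq_bigr do rewrite mxE mulrAC.
rewrite -mulr_suml normrM normfV normr_nat ltr_pdivrMr //.
have eq1 : 1 < e * q.+1%:R by move: qe; rewrite -(ltr_pM2l e0) mulfV ?gt_eqF.
apply: lt_le_trans (ak r) _; rewrite ler_pdivrMr ?ltr0n // mulrAC.
by rewrite -[X in X <= _]mul1r ler_pM2r // ltW.
Qed.

Lemma mx_measurable_zero_in_conv :
  mx_measurable [set M : 'M[R]_(d, n) | zero_in_conv (fun i => M *m v i)].
Proof.
rewrite (_ : [set M | _] = \bigcap_q \bigcup_k approx_conv q k).
  apply: (bigcapT_measurable (T := T)) => q.
  by apply: bigcupT_measurable => k; exact: measurable_approx_conv.
apply/seteqP; split=> M /= => [Mc q _|Mq]; last first.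
  by apply: approx_zero_in_conv => q; have [k _ Mk] := Mq q I; exists k.
by have [k Mk] := zero_in_conv_approx q Mc; exists k.
Qed.

End ZeroInConvMeasurable.

Section SignedPermutations.
Variable R : realType.

Lemma mulmx_g_act d n (M : 'M[R]_(d, n)) (s : 'S_n) eps x :
  M *m g_act s eps x = perm_sign_cols s eps M *m x.
Proof.
apply/matrixP => r c; rewrite !mxE (ord1 c) (reindex_inj (@perm_inj _ s)) /=.
by apply: eq_bigr => k _; rewrite !mxE permK mulrCA mulrA.
Qed.

Lemma g_act_eq0 n (s : 'S_n) eps (x : 'cV[R]_n) : (g_act s eps x == 0) = (x == 0).
Proof.
apply/eqP/eqP => [gx0|->]; last by apply/matrixP => k c; rewrite !mxE mulr0.
apply/matrixP => k c; rewrite (ord1 c) mxE.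
have /eqP := congr1 (fun v : 'cV[R]_n => v (s k) ord0) gx0.
by rewrite !mxE permK mulf_eq0 signr_eq0 => /eqP.
Qed.

Lemma ker_meets_g_image d n (M : 'M[R]_(d, n)) (s : 'S_n) eps (S : set 'cV[R]_n) :
  (exists x, x != 0 /\ M *m x = 0 /\ (g_act s eps @` S) x) <->
  (exists y, y != 0 /\ perm_sign_cols s eps M *m y = 0 /\ S y).
Proof.
split=> [[x [x0 [Mx [y Sy yx]]]]|[y [y0 [My Sy]]]].
  by exists y; rewrite -mulmx_g_act -(g_act_eq0 s eps) yx.
by exists (g_act s eps y); rewrite g_act_eq0 mulmx_g_act; do 2!split=> //; exists y.
Qed.

Definition rev_perm n : 'S_n := perm (@rev_ord_inj n).

Definition rev_cV n (x : 'cV[R]_n) : 'cV[R]_n := \col_j x (rev_ord j) ord0.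

Lemma rev_cV_sub n (x y : 'cV[R]_n) : rev_cV (x - y) = rev_cV x - rev_cV y.
Proof. by apply/matrixP => j c; rewrite !mxE. Qed.

Lemma mulmx_rev_cols d n (M : 'M[R]_(d, n)) (x : 'cV[R]_n) :
  perm_sign_cols (rev_perm n) (fun=> false) M *m rev_cV x = M *m x.
Proof.
rewrite -mulmx_g_act; congr (_ *m _); apply/matrixP => j c.
rewrite (ord1 c) !mxE mul1r; congr (x _ ord0).
by rewrite -[RHS](permKV (rev_perm n)) [in RHS]permE.
Qed.

Lemma mx_measurable_zero_in_conv_perm d n m (s : 'S_n) eps (v : 'I_m -> 'cV[R]_n) :
  mx_measurable
    [set M : 'M[R]_(d, n) | zero_in_conv (fun i => perm_sign_cols s eps M *m v i)].
Proof.
rewrite (_ : [set M | _] = [set M | zero_in_conv (fun i => M *m g_act s eps (v i))]).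
  exact: mx_measurable_zero_in_conv.
by apply/funext => M; apply/propext; apply: zero_in_conv_ext => i; rewrite mulmx_g_act.
Qed.

End SignedPermutations.

Section HullPoints.
Variable R : realType.

Definition ind_lt n k : 'cV[R]_n := \col_j (if (j < k)%N then 1 else 0).
Definition ind_ge n k : 'cV[R]_n := \col_j (if (k <= j)%N then 1 else 0).
Definition ind_eq n k : 'cV[R]_n := \col_j (if (j == k :> nat) then 1 else 0).
Arguments ind_lt : clear implicits.
Arguments ind_ge : clear implicits.
Arguments ind_eq : clear implicits.

Lemma psumE d n (M : 'M[R]_(d, n)) k : psum M k = M *m ind_lt n k.
Proof.
apply/matrixP => r c; rewrite (ord1 c) /psum summxE !mxE big_mkcond /=.
by apply: eq_bigr => i _; rewrite !mxE; case: ifP; rewrite ?mulr1 ?mulr0.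
Qed.

Lemma psum_starE d n (M : 'M[R]_(d, n)) :
  psum_star M = M *m (ind_lt n n.-1 - ind_eq n n.-1).
Proof.
rewrite mulmxBr -psumE; congr (_ - _).
apply/matrixP => r c; rewrite (ord1 c) summxE !mxE big_mkcond /=.
by apply: eq_bigr => i _; rewrite !mxE; case: ifP; rewrite ?mulr1 ?mulr0.
Qed.

Definition hull_size t n :=
  match t with TypeA => n.-1 | TypeB => n | TypeD => n.+1 end.

Definition hull_vec t n : 'I_(hull_size t n) -> 'cV[R]_n :=
  match t return 'I_(hull_size t n) -> 'cV[R]_n with
  | TypeA | TypeB => fun i => ind_lt n i.+1
  | TypeD => fun i =>
      if (i < n)%N then ind_lt n i.+1 else ind_lt n n.-1 - ind_eq n n.-1
  end.
Arguments hull_vec : clear implicits.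

Lemma in_conv_hull_points t d n (M : 'M[R]_(d, n)) :
  in_conv_hull (hull_points t M) 0 <-> zero_in_conv (fun i => M *m hull_vec t n i).
Proof.
have conv_nth k (s : seq 'cV[R]_d) (p : 'I_k -> 'cV[R]_d) (sk : size s = k) :
    (forall i : 'I_k, nth 0 s i = p i) -> in_conv_hull s 0 <-> zero_in_conv p.
  by case: k / sk p => p sp; exact: zero_in_conv_ext.
case: t; (apply: conv_nth; first by rewrite ?size_rcons size_map size_iota) => i /=.
- by rewrite (nth_map 0%N) ?size_iota // nth_iota // psumE.
- by rewrite (nth_map 0%N) ?size_iota // nth_iota // psumE.
rewrite nth_rcons size_map size_iota; case: ifP => [i_lt|i_ge].
  by rewrite (nth_map 0%N) ?size_iota // nth_iota // psumE.
have /eqP -> : nat_of_ord i == n by rewrite eqn_leq -ltnS ltn_ord leqNgt i_ge.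
by rewrite eqxx psum_starE.
Qed.

End HullPoints.
Arguments ind_lt {R} n k.
Arguments ind_ge {R} n k.
Arguments ind_eq {R} n k.
Arguments hull_vec {R} t n.

Section ConeClosure.
Variable R : realType.
Variable n : nat.
Implicit Types x y : 'cV[R]_n.

Definition weak_cone t : set 'cV[R]_n :=
  match t with
  | TypeA => [set x | (forall i j : 'I_n, (i < j)%N -> x i ord0 <= x j ord0)
                      /\ \sum_i x i ord0 = 0]
  | TypeB => [set x | (forall i : 'I_n, (nat_of_ord i == 0)%N -> 0 <= x i ord0)
                      /\ (forall i j : 'I_n, (i < j)%N -> x i ord0 <= x j ord0)]
  | TypeD => [set x | forall i j : 'I_n, (i < j)%N ->
                (if (nat_of_ord i == 0)%N then `|x i ord0| else x i ord0) <= x j ord0]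
  end.

Lemma continuous_entry_diff (f : R -> R) (i j : 'I_n) : continuous f ->
  continuous (fun y : 'cV[R]_n => y j ord0 - f (y i ord0)).
Proof.
move=> cf y; apply: continuousB; first exact: continuous_mx_entry.
by apply: continuous_comp; [exact: continuous_mx_entry|exact: cf].
Qed.

Lemma closure_le_entries (C : set 'cV[R]_n) (i j : 'I_n) :
  (forall y, C y -> y i ord0 <= y j ord0) ->
  forall x, closure C x -> x i ord0 <= x j ord0.
Proof.
move=> Cij x cx; rewrite -subr_ge0.
apply: (closure_ge0 (phi := fun y : 'cV[R]_n => y j ord0 - y i ord0)) cx => [|y /Cij].
  exact: (@continuous_entry_diff id i j (fun=> cvg_id)).
by rewrite subr_ge0.
Qed.

Lemma ray_closure (C W : set 'cV[R]_n) :
  (forall x, W x -> exists v, forall e, 0 < e -> C (x + e *: v)) -> W `<=` closure C.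
Proof.
move=> WC x Wx B /nbhs_ballP [e e0 eB]; have [v Cv] := WC x Wx.
have e'0 : 0 < e / (`|v| + 1) by rewrite divr_gt0 // ltr_wpDl.
exists (x + (e / (`|v| + 1)) *: v); split; first exact: Cv.
apply: eB; rewrite -ball_normE /= opprD addrA subrr sub0r normrN normrZ.
by rewrite gtr0_norm // mulrAC ltr_pdivrMr ?ltr_wpDl // ltr_pM2l // ltrDl.
Qed.

Lemma closure_coneA : (0 < n)%N -> closure (@coneC R TypeA n) = weak_cone TypeA.
Proof.
move=> n0; apply/seteqP; split=> [x cx|].
  split=> [i j ij|]; first by apply: closure_le_entries cx => y [/(_ i j ij)/ltW].
  apply/eqP; rewrite eq_le -oppr_ge0 -sub0r; apply/andP; split.
    apply: (closure_ge0 (phi := fun y : 'cV[R]_n => 0 - \sum_i y i ord0)) cx.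
      by move=> y; apply: continuousB; [exact: cst_continuous|exact: continuous_cV_sum].
    by move=> y [_ ->]; rewrite subr0.
  apply: (closure_ge0 (phi := fun y : 'cV[R]_n => \sum_i y i ord0)) cx => [|y [_ ->]//].
  exact: continuous_cV_sum.
apply: ray_closure => x [xle x0].
(* move along the centred increasing direction [j - mean] *)
pose c := (\sum_(j < n) (j : nat)%:R) / n%:R : R.
exists (\col_j ((j : nat)%:R - c)) => e e0; split=> [i j ij|].
  rewrite !mxE; have := xle i j ij.
  have : e * (i%:R - c) < e * (j%:R - c) by rewrite ltr_pM2l // ltrD2r ltr_nat.
  lra.
under eq_bigr do rewrite !mxE.
rewrite big_split /= x0 add0r -mulr_sumr sumrB sumr_const card_ord.
by rewrite -mulr_natr /c divfK ?pnatr_eq0 -?lt0n // subrr mulr0.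
Qed.

Lemma closure_coneB : closure (@coneC R TypeB n) = weak_cone TypeB.
Proof.
apply/seteqP; split=> [x cx|].
  split=> [i i0|i j ij]; last by apply: closure_le_entries cx => y [_ /(_ i j ij)/ltW].
  apply: (closure_ge0 (phi := fun y : 'cV[R]_n => y i ord0)) cx => [|y [/(_ i i0)/ltW]//].
  exact: continuous_mx_entry.
apply: ray_closure => x [x0 xle].
exists (\col_j (j.+1)%:R) => e e0; split=> [i i0|i j ij]; rewrite !mxE.
  have := x0 i i0; have : 0 < e * (i.+1)%:R by rewrite mulr_gt0.
  lra.
have := xle i j ij.
have : e * (i.+1)%:R < e * (j.+1)%:R by rewrite ltr_pM2l // ltr_nat.
lra.
Qed.

Lemma norm_add_signed (a e : R) : 0 < e ->
  `|a + e * (if 0 <= a then 1 else -1)| = `|a| + e.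
Proof.
move=> e0; case: ifPn => [a0|]; first by rewrite mulr1 !ger0_norm // addr_ge0 // ltW.
by rewrite -ltNge mulrN1 => a0; rewrite !ltr0_norm //; lra.
Qed.

Lemma closure_coneD : closure (@coneC R TypeD n) = weak_cone TypeD.
Proof.
apply/seteqP; split=> [x cx i j ij|].
  case: ifP => i0; last first.
    by apply: closure_le_entries cx => y /= [_ /(_ i j ij)]; rewrite i0 => /ltW.
  rewrite -subr_ge0.
  apply: (closure_ge0 (phi := fun y : 'cV[R]_n => y j ord0 - `|y i ord0|)) cx.
    exact: (@continuous_entry_diff Num.norm i j (@norm_continuous _ R^o)).
  by move=> y /= [_ /(_ i j ij)]; rewrite i0 subr_ge0 => /ltW.
apply: ray_closure => x xle.
(* push the first coordinate away from 0 and spread the others increasingly *)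
exists (\col_j (if (nat_of_ord j == 0)%N then (if 0 <= x j ord0 then 1 else -1)
               else (j.+1)%:R)) => e e0; split=> [i i0|i j ij].
  by rewrite !mxE i0 norm_add_signed //; have := normr_ge0 (x i ord0); lra.
rewrite !mxE; have := xle i j ij.
have j0 : (0 < j)%N := leq_ltn_trans (leq0n i) ij.
have -> : (nat_of_ord j == 0)%N = false by apply/negbTE; rewrite -lt0n.
case: ifP => i0.
  rewrite norm_add_signed //.
  have : e * 1 < e * (j.+1)%:R by rewrite ltr_pM2l // ltr1n ltnS.
  lra.
have : e * (i.+1)%:R < e * (j.+1)%:R by rewrite ltr_pM2l // ltr_nat.
lra.
Qed.

End ConeClosure.
Arguments weak_cone {R n} t.

Lemma ker_meets_cone_zero_in_conv (R : realType) d n k (W : set 'cV[R]_n)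
    (r : 'I_k -> 'cV[R]_n) (u : 'rV[R]_n) :
  (forall c : 'I_k -> R, (forall i, 0 <= c i) -> W (\sum_i c i *: r i)) ->
  (forall i, (u *m r i) ord0 ord0 = 1) ->
  (forall x, W x -> exists c : 'I_k -> R, (forall i, 0 <= c i) /\ x = \sum_i c i *: r i) ->
  forall N : 'M[R]_(d, n),
  (exists x, x != 0 /\ N *m x = 0 /\ W x) <-> zero_in_conv (fun i => N *m r i).
Proof.
move=> Wr ur rW N; split=> [[x [x0 [Nx Wx]]]|[l [l0 [l1 Nl]]]].
  have [c [c0 xc]] := rW x Wx; pose s := \sum_i c i.
  have s0 : 0 < s.
    rewrite lt_def sumr_ge0 // andbT; apply: contra x0 => /eqP /psumr_eq0P c_eq0.
    by rewrite xc big1 // => i _; rewrite c_eq0 // scale0r.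
  exists (fun i => c i / s); split=> [i|]; first by rewrite divr_ge0 // ltW.
  split; first by rewrite -mulr_suml divff // gt_eqF.
  have Nc : \sum_i c i *: (N *m r i) = 0.
    by rewrite -[RHS]Nx xc mulmx_sumr; apply: eq_bigr => i _; rewrite scalemxAr.
  transitivity (s^-1 *: \sum_i c i *: (N *m r i)); last by rewrite Nc scaler0.
  by rewrite scaler_sumr; apply: eq_bigr => i _; rewrite scalerA mulrC.
exists (\sum_i l i *: r i); split; last split; last exact: Wr.
  (* [u] takes the value [\sum_i l i = 1] on this combination *)
  apply/eqP => /(congr1 (fun y => (u *m y) ord0 ord0)).
  rewrite mulmx0 mulmx_sumr summxE [RHS]mxE.
  under eq_bigr do rewrite -scalemxAr mxE ur mulr1.
  by rewrite l1 => /eqP; rewrite oner_eq0.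
by rewrite mulmx_sumr -[RHS]Nl; apply: eq_bigr => i _; rewrite scalemxAr.
Qed.

Section Tails.
Variable R : realType.
Variable n : nat.
Implicit Types x y : 'cV[R]_n.

Lemma rev_cV_ind_lt k : (k <= n)%N -> rev_cV (ind_lt n k) = ind_ge n (n - k) :> 'cV[R]_n.
Proof.
move=> kn; apply/matrixP => j c; rewrite !mxE /=.
by have -> : (n - j.+1 < k)%N = (n - k <= j)%N by have := ltn_ord j; lia.
Qed.

Lemma rev_cV_ind_eq_last : (0 < n)%N -> rev_cV (ind_eq n n.-1) = ind_eq n 0%N :> 'cV[R]_n.
Proof.
move=> n0; apply/matrixP => j c; rewrite !mxE /=.
by have -> : ((n - j.+1)%N == n.-1) = (nat_of_ord j == 0)%N by have := ltn_ord j; lia.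
Qed.

Lemma ind_ge_entry t (j : 'I_n) : ind_ge n t j ord0 = (if (t <= j)%N then 1 else 0 : R).
Proof. by rewrite mxE. Qed.

Lemma telescope_ind_ge (u : nat -> R) (j : 'I_n) :
  \sum_(i < n) (u (n - i)%N - u (n - i.+1)%N) * ind_ge n (n - i.+1) j ord0
  = u j.+1 - u 0%N.
Proof.
rewrite (reindex_inj rev_ord_inj) /=.
rewrite (eq_bigr (fun i : 'I_n => if (i < j.+1)%N then u i.+1 - u i else 0)); last first.
  move=> i _; rewrite ind_ge_entry; have hi := ltn_ord i.
  have -> : (n - (n - i.+1) = i.+1)%N by lia.
  have -> : (n - (n - i.+1).+1 = i)%N by lia.
  by rewrite ltnS; case: ifP; rewrite ?mulr1 ?mulr0.
rewrite -big_mkcond /= -(big_ord_widen _ (fun i => u i.+1 - u i)) //.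
by rewrite -(big_mkord xpredT (fun i => u i.+1 - u i)) telescope_sumr.
Qed.

Lemma sum_ind_ge t : (t <= n)%N -> \sum_j ind_ge n t j ord0 = (n - t)%:R :> R.
Proof.
move=> tn; under eq_bigr do rewrite ind_ge_entry.
rewrite -(big_mkord xpredT (fun j => if (t <= j)%N then (1 : R) else 0)).
rewrite (big_cat_nat _ tn) //= big_nat_cond big1 => [|i /andP[/andP[_ it]]]; last first.
  by rewrite leqNgt it.
rewrite add0r big_nat_cond (eq_bigr (fun _ => 1)) => [|i /andP[/andP[-> _]]] //.
by rewrite -big_nat_cond big_const_nat iter_addr addr0.
Qed.

Lemma sum_pick (k : 'I_n) (f : 'I_n -> R) : \sum_j (nat_of_ord j == k)%:R * f j = f k.
Proof.
rewrite (bigD1 k) //= eqxx mul1r big1 ?addr0 // => j jk.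
by rewrite (inj_eq val_inj) (negbTE jk) mul0r.
Qed.

Lemma sum_scale_entry k (c : 'I_k -> R) (r : 'I_k -> 'cV[R]_n) j :
  (\sum_i c i *: r i) j ord0 = \sum_i c i * r i j ord0.
Proof. by rewrite summxE; apply: eq_bigr => i _; rewrite mxE. Qed.

Lemma ind_ge_ge0 t j : 0 <= ind_ge n t j ord0 :> R.
Proof. by rewrite ind_ge_entry; case: ifP. Qed.

Lemma ind_ge_mono t (i j : 'I_n) : (i <= j)%N -> ind_ge n t i ord0 <= ind_ge n t j ord0 :> R.
Proof.
move=> ij; rewrite !ind_ge_entry; case: ifP => ti; last by case: ifP.
by rewrite (leq_trans ti ij).
Qed.

Lemma ind_ge_decomp (u : nat -> R) :
  \sum_(i < n) (u (n - i)%N - u (n - i.+1)%N) *: ind_ge n (n - i.+1)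
  = \col_j (u j.+1 - u 0%N).
Proof. by apply/matrixP => j c; rewrite (ord1 c) sum_scale_entry telescope_ind_ge mxE. Qed.

(* the entry of [x] at a natural index, [0] out of range *)
Definition entry_nat x (t : nat) : R := \sum_(j < n | nat_of_ord j == t) x j ord0.

Lemma entry_natE x (j : 'I_n) : entry_nat x j = x j ord0.
Proof. by rewrite /entry_nat (eq_bigl (pred1 j)) ?big_pred1_eq. Qed.

Lemma entry_nat_mono x s t : (s <= t < n)%N ->
  (forall i j : 'I_n, (s <= i)%N -> (i < j)%N -> x i ord0 <= x j ord0) ->
  entry_nat x s <= entry_nat x t.
Proof.
move=> /andP[st tn] xle; have sn : (s < n)%N := leq_ltn_trans st tn.
rewrite -[s]/(nat_of_ord (Ordinal sn)) -[t]/(nat_of_ord (Ordinal tn)) !entry_natE.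
case: (ltngtP s t) => [lt||eq]; first exact: xle.
  by rewrite ltnNge st.
by rewrite (_ : Ordinal sn = Ordinal tn) //; apply: val_inj.
Qed.

End Tails.

Section ConeRays.
Variable R : realType.

Definition cone_ray t n : 'I_(hull_size t n) -> 'cV[R]_n :=
  match t return 'I_(hull_size t n) -> 'cV[R]_n with
  | TypeA => fun i => ind_ge n (n - i.+1) - ((i.+1)%:R / n%:R) *: const_mx 1
  | TypeB => fun i => ind_ge n (n - i.+1)
  | TypeD => fun i =>
      if (i < n)%N then ind_ge n (n - i.+1) else ind_ge n 1%N - ind_eq n 0%N
  end.
Arguments cone_ray : clear implicits.

Variable n : nat.
Implicit Types x : 'cV[R]_n.

Lemma weak_coneB_comb (c : 'I_n -> R) : (forall i, 0 <= c i) ->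
  weak_cone TypeB (\sum_i c i *: cone_ray TypeB n i).
Proof.
move=> c0; split=> [i _|i j ij]; rewrite !sum_scale_entry.
  by apply: sumr_ge0 => k _; rewrite mulr_ge0 // ind_ge_ge0.
by apply: ler_sum => k _; rewrite ler_wpM2l // ind_ge_mono // ltnW.
Qed.

Lemma weak_coneB_decomp x : weak_cone TypeB x ->
  exists c : 'I_n -> R, (forall i, 0 <= c i) /\ x = \sum_i c i *: cone_ray TypeB n i.
Proof.
move=> [x0 xle]; pose u t := if t is t'.+1 then entry_nat x t' else 0.
exists (fun i => u (n - i)%N - u (n - i.+1)%N); split; last first.
  by rewrite ind_ge_decomp; apply/matrixP => j c; rewrite (ord1 c) mxE /u /= subr0 entry_natE.
move=> i; have hi := ltn_ord i; rewrite -(subnSK hi) subr_ge0 /=.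
case E: (n - i.+1)%N => [|t] /=.
  have n0 : (0 < n)%N by lia.
  by rewrite -[0%N]/(nat_of_ord (Ordinal n0)) entry_natE; apply: x0.
by apply: entry_nat_mono => [|k l _]; [apply/andP; lia | exact: xle].
Qed.

Lemma cone_rayD_entry (i : 'I_n.+1) (j : 'I_n) : cone_ray TypeD n i j ord0 =
  if (i < n)%N then (if (n - i.+1 <= j)%N then 1 else 0)
  else (if (0 < j)%N then 1 else -1).
Proof.
by rewrite /=; case: ifP => _; rewrite !mxE // lt0n; case: (_ == _); rewrite /= ?subr0 ?sub0r.
Qed.

Lemma weak_coneD_comb (c : 'I_n.+1 -> R) : (forall i, 0 <= c i) ->
  weak_cone TypeD (\sum_i c i *: cone_ray TypeD n i).
Proof.
move=> c0 i j ij; have j0 : (0 < j)%N := leq_ltn_trans (leq0n i) ij.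
rewrite !sum_scale_entry; case: ifP => [/eqP i0|i0].
  apply: le_trans (ler_norm_sum _ _ _) (ler_sum _ _) => k _.
  rewrite normrM ger0_norm // ler_wpM2l // !cone_rayD_entry i0 j0 /=.
  case: ifP => _; last by rewrite normrN normr1.
  by case: ifP => [tj|]; [rewrite normr1 (leq_trans tj) // ltnW | rewrite normr0; case: ifP].
apply: ler_sum => k _; rewrite ler_wpM2l // !cone_rayD_entry lt0n i0 j0.
case: ifP => _ //; case: ifP => [ti|]; last by case: ifP.
by rewrite (leq_trans ti) // ltnW.
Qed.

Lemma weak_coneD_decomp x : (1 < n)%N -> weak_cone TypeD x ->
  exists c : 'I_n.+1 -> R, (forall i, 0 <= c i) /\ x = \sum_i c i *: cone_ray TypeD n i.
Proof.
move=> n1 xle; have n0 : (0 < n)%N := ltnW n1.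
have x01 : `|entry_nat x 0%N| <= entry_nat x 1%N.
  by rewrite -[0%N]/(nat_of_ord (Ordinal n0)) -[1%N]/(nat_of_ord (Ordinal n1)) !entry_natE;
    apply: (xle (Ordinal n0) (Ordinal n1)).
(* [x = a (e_0 + ... + e_(n-1)) + b (e_1 + ... + e_(n-1) - e_0) + (increasing tails)] *)
pose a := (entry_nat x 1%N + entry_nat x 0%N) / 2.
pose b := (entry_nat x 1%N - entry_nat x 0%N) / 2.
pose u t := match t with 0 => 0 | 1 => a | t'.+1 => entry_nat x t' - b end.
have a0 : 0 <= a.
  by rewrite divr_ge0 //; have := ler_norm (- entry_nat x 0%N); rewrite normrN; lra.
have b0 : 0 <= b by rewrite divr_ge0 //; have := ler_norm (entry_nat x 0%N); lra.
exists (fun i : 'I_n.+1 => if (i < n)%N then u (n - i)%N - u (n - i.+1)%N else b).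
split=> [i|].
  case: ifP => [hi|_ //]; rewrite -(subnSK hi).
  case E: (n - i.+1)%N => [|[|t]] /=; first by rewrite subr0.
    by rewrite /a /b; lra.
  rewrite subr_ge0 lerD2r; apply: entry_nat_mono => [|k l k0 kl]; first by apply/andP; lia.
  have k0' : (nat_of_ord k == 0)%N = false by apply/negbTE; rewrite -lt0n (leq_trans _ k0).
  by have := xle k l kl; rewrite k0'.
rewrite big_ord_recr /= ltnn.
under eq_bigr do rewrite ltn_ord /=.
rewrite ind_ge_decomp; apply/matrixP => j z; rewrite (ord1 z) !mxE.
case: j => [[|j] jn] /=; rewrite -[x _ ord0]entry_natE /= /a /b; lra.
Qed.

Lemma cone_rayB_unit (i : 'I_n) :
  ((\row_j (nat_of_ord j == n.-1)%:R) *m cone_ray TypeB n i) ord0 ord0 = 1.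
Proof.
have ni : (n.-1 < n)%N by have := ltn_ord i; lia.
rewrite mxE (eq_bigr (fun j => (nat_of_ord j == Ordinal ni)%:R * cone_ray TypeB n i j ord0)).
  by rewrite sum_pick ind_ge_entry /=; have := ltn_ord i; case: ifP => //; lia.
by move=> j _; rewrite mxE.
Qed.

Lemma cone_rayD_unit (i : 'I_n.+1) : (1 < n)%N ->
  ((\row_j (nat_of_ord j == n.-1)%:R) *m cone_ray TypeD n i) ord0 ord0 = 1.
Proof.
move=> n1; have ni : (n.-1 < n)%N by lia.
rewrite mxE (eq_bigr (fun j => (nat_of_ord j == Ordinal ni)%:R * cone_ray TypeD n i j ord0)).
  rewrite sum_pick cone_rayD_entry /=; case: ifP => [hi|_]; last by rewrite ifT //; lia.
  by rewrite ifT //; lia.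
by move=> j _; rewrite mxE.
Qed.

End ConeRays.
Arguments cone_ray {R} t n.

Section ConeRaysA.
Variable R : realType.
Variable m : nat.
Local Notation n := m.+1.
Local Notation ray := (@cone_ray R TypeA n).
Implicit Types x : 'cV[R]_n.

Lemma cone_rayA_entry (i : 'I_m) (j : 'I_n) :
  ray i j ord0 = ind_ge n (n - i.+1) j ord0 - (i.+1)%:R / n%:R.
Proof. by rewrite !mxE mulr1. Qed.

Lemma sum_cone_rayA (i : 'I_m) : \sum_j ray i j ord0 = 0.
Proof.
under eq_bigr do rewrite cone_rayA_entry.
rewrite sumrB sum_ind_ge ?leq_subr // sumr_const card_ord.
rewrite -[X in _ - X]mulr_natr divfK ?pnatr_eq0 //.
by rewrite subKn ?subrr // ltnW // ltnS.
Qed.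

Lemma weak_coneA_comb (c : 'I_m -> R) : (forall i, 0 <= c i) ->
  weak_cone TypeA (\sum_i c i *: ray i).
Proof.
move=> c0; split=> [i j ij|].
  rewrite !sum_scale_entry; apply: ler_sum => k _.
  by rewrite ler_wpM2l // !cone_rayA_entry lerD2r ind_ge_mono // ltnW.
under eq_bigr do rewrite sum_scale_entry.
by rewrite exchange_big /= big1 // => i _; rewrite -mulr_sumr sum_cone_rayA mulr0.
Qed.

Lemma cone_rayA_unit (i : 'I_m) :
  ((\row_j ((nat_of_ord j == m)%:R - (nat_of_ord j == 0%N)%:R)) *m ray i) ord0 ord0 = 1.
Proof.
rewrite mxE; under eq_bigr do rewrite mxE mulrBl.
rewrite sumrB (sum_pick (ord_max : 'I_n)) (sum_pick (ord0 : 'I_n)) !cone_rayA_entry.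
rewrite !ind_ge_entry /= ifT; last by rewrite leq_subLR addSnnS leq_addl.
rewrite ifF; last by apply/negbTE; rewrite leqn0 subn_eq0 -ltnNge ltnS.
by rewrite sub0r opprK subrK.
Qed.

Lemma weak_coneA_decomp x : weak_cone TypeA x ->
  exists c : 'I_m -> R, (forall i, 0 <= c i) /\ x = \sum_i c i *: ray i.
Proof.
move=> [xle x0]; pose u t := if t is t'.+1 then entry_nat x t' - entry_nat x 0%N else 0.
pose c (i : 'I_m) := u (n - i)%N - u (n - i.+1)%N.
have c0 i : 0 <= c i.
  have hi : (i < n)%N by apply: ltnW; rewrite ltnS.
  rewrite /c -(subnSK hi); case E: (n - i.+1)%N => [|t] /=.
    by move: E (ltn_ord i); lia.
  rewrite subr_ge0 lerD2r; apply: entry_nat_mono => [|k l _]; first by apply/andP; lia.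
  exact: xle.
exists c; split=> //.
have tails : \sum_i c i *: ind_ge n (n - i.+1) = \col_j (x j ord0 - x ord0 ord0).
  have := @ind_ge_decomp R n u; rewrite big_ord_recr /= subnn subSnn /= subrr subr0.
  rewrite scale0r addr0 => ->; apply/matrixP => j z.
  by rewrite !mxE subr0 entry_natE (entry_natE x ord0).
pose K := \sum_i c i * ((i.+1)%:R / n%:R).
have yE : \sum_i c i *: ray i = \col_j (x j ord0 - x ord0 ord0 - K).
  rewrite /cone_ray /=.
  under eq_bigr do rewrite scalerBr scalerA.
  by rewrite sumrB tails -scaler_suml; apply/matrixP => j z; rewrite !mxE mulr1.
(* both [x] and the combination have coordinate sum [0], which pins down [K] *)
have xK : x ord0 ord0 + K = 0.
  have := (weak_coneA_comb c0).2; rewrite yE.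
  under eq_bigr do rewrite mxE.
  rewrite !sumrB x0 !sumr_const card_ord sub0r -opprD -mulrnDl -mulr_natr.
  by move/eqP; rewrite oppr_eq0 mulf_eq0 pnatr_eq0 orbF => /eqP.
by rewrite yE; apply/matrixP => j z; rewrite (ord1 z) mxE; lra.
Qed.

End ConeRaysA.

Section Assembly.
Variable R : realType.

Definition cone_dim_ok t n :=
  match t with TypeA => (0 < n)%N | TypeB => true | TypeD => (1 < n)%N end.

Lemma ker_meets_closure_cone t d n (N : 'M[R]_(d, n)) : cone_dim_ok t n ->
  (exists y, y != 0 /\ N *m y = 0 /\ closure (@coneC R t n) y) <->
  zero_in_conv (fun i => N *m cone_ray t n i).
Proof.
case: t => /= [n0|_|n1].
- case: n n0 N => // m _ N; rewrite closure_coneA //.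
  apply: ker_meets_cone_zero_in_conv;
    [exact: weak_coneA_comb | exact: cone_rayA_unit | exact: weak_coneA_decomp].
- rewrite closure_coneB; apply: ker_meets_cone_zero_in_conv;
    [exact: weak_coneB_comb | exact: cone_rayB_unit | exact: weak_coneB_decomp].
rewrite closure_coneD; apply: ker_meets_cone_zero_in_conv => [c c0|i|x xD].
- exact: weak_coneD_comb.
- exact: cone_rayD_unit.
- exact: weak_coneD_decomp.
Qed.

Lemma mulmx_rev_cone_ray t d n (M : 'M[R]_(d, n)) (i : 'I_(hull_size t n)) :
  cone_dim_ok t n -> (t = TypeA -> psum M n = 0) ->
  perm_sign_cols (rev_perm n) (fun=> false) M *m cone_ray t n i = M *m hull_vec t n i.
Proof.
set M' := perm_sign_cols _ _ M; move=> tn hA; rewrite -[RHS](mulmx_rev_cols M).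
case: t i tn hA => /= i tn hA.
- have i_lt : (i.+1 <= n)%N by have := ltn_ord i; lia.
  have M'1 : M' *m (const_mx 1 : 'cV[R]_n) = 0.
    rewrite -(hA erefl) psumE -[RHS]mulmx_rev_cols rev_cV_ind_lt // subnn.
    by congr (_ *m _); apply/matrixP => j k; rewrite !mxE.
  by rewrite mulmxBr -scalemxAr M'1 scaler0 subr0 rev_cV_ind_lt.
- by rewrite rev_cV_ind_lt.
case: ifP => [i_lt|_]; first by rewrite rev_cV_ind_lt.
rewrite rev_cV_sub rev_cV_ind_lt ?leq_pred // rev_cV_ind_eq_last ?(ltnW tn) //.
by have -> : (n - n.-1 = 1)%N by lia.
Qed.

Lemma measure_ae_eq_set d (T : measurableType d) (mu : {measure set T -> \bar R})
    (A B G : set T) :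
  measurable A -> measurable B -> {ae mu, forall w, G w} ->
  (forall w, G w -> A w <-> B w) -> mu A = mu B.
Proof.
move=> mA mB [N [mN N0 GN]] AB.
have mu_diff C : measurable C -> mu C = mu (C `\` N).
  move=> mC; rewrite (measureDI mu mC mN) -[RHS]adde0; congr (_ + _)%E.
  apply/eqP; rewrite eq_le measure_ge0 andbT -N0.
  by apply: le_measure; rewrite ?inE //; (try exact: measurableI); exact: subIsetr.
rewrite (mu_diff _ mA) (mu_diff _ mB); congr (mu _); apply/seteqP.
by split=> w [Cw Nw]; split=> //; apply/(AB w) => //; apply: contrapT => /GN.
Qed.

Lemma prob_zero_in_conv_perm dm (Omega : measurableType dm) (P : probability Omega R)
    d n k (X : Omega -> 'M[R]_(d, n)) (v : 'I_k -> 'cV[R]_n) (L G : set Omega)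
    (s s' : 'S_n) (eps eps' : 'I_n -> bool) :
  random_mx X -> measurable L -> {ae P, forall w, G w} ->
  (forall w, G w ->
     L w <-> zero_in_conv (fun i => perm_sign_cols s' eps' (X w) *m v i)) ->
  eq_in_law P X (perm_sign_cols s' eps' \o X) ->
  eq_in_law P X (perm_sign_cols s eps \o X) ->
  P L = P [set w | zero_in_conv (fun i => perm_sign_cols s eps (X w) *m v i)].
Proof.
move=> hX mL aeG LG law' law.
have mB := @mx_measurable_zero_in_conv R d n k v.
rewrite (measure_ae_eq_set mL _ aeG LG); last first.
  exact: (hX _ (mx_measurable_zero_in_conv_perm s' eps' v)).
by rewrite -[LHS](law' _ mB) (law _ mB).
Qed.

Lemma type_assumptions_invariance dm (Omega : measurableType dm)
    (P : probability Omega R) t d n (X : Omega -> 'M[R]_(d, n)) s eps :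
  type_assumptions P t X -> signs_ok t eps ->
  [/\ cone_dim_ok t n, eq_in_law P X (perm_sign_cols s eps \o X),
      eq_in_law P X (perm_sign_cols (rev_perm n) (fun=> false) \o X)
    & {ae P, forall w, t = TypeA -> psum (X w) n = 0}].
Proof.
case: t => /= [[dn [law ae0]] eps0|[dn law] _|[dn law] epsD].
- have -> : eps = fun=> false.
    by apply/funext => k; move/forallP: eps0 => /(_ k); case: (eps k).
  by split=> //; [lia | apply: filterS ae0 => w ? _].
- by split=> //; apply: aeW.
split=> //; [lia | exact: law | apply: law | exact: aeW].
by rewrite /signs_ok big1.
Qed.

End Assembly.

Theorem lemma6p1 (R : realType) (dm : measure_display) (Omega : measurableType dm)
  (P : probability Omega R) (t : rtype) (d n : nat)
  (X : Omega -> 'M[R]_(d, n)) :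
  random_mx X ->
  type_assumptions P t X ->
  forall (s : 'S_n) (eps : 'I_n -> bool), signs_ok t eps ->
  P [set w | in_conv_hull (hull_points t (X w)) 0]
  = P [set w | exists x : 'cV[R]_n,
         x != 0 /\ X w *m x = 0 /\ (g_act s eps @` closure (@coneC R t n)) x].
Proof.
move=> hX hT s eps hse.
have [tn law law_rev aeA] := type_assumptions_invariance s hT hse.
transitivity
  (P [set w | zero_in_conv (fun i => perm_sign_cols s eps (X w) *m cone_ray t n i)]).
  apply: prob_zero_in_conv_perm aeA _ law_rev law => // [|w wA].
    rewrite (_ : [set w | _] = X @^-1` [set M | zero_in_conv (fun i => M *m hull_vec t n i)]).
      by apply: hX; exact: mx_measurable_zero_in_conv.
    by apply/funext => w; apply/propext; exact: in_conv_hull_points.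
  apply: iff_trans (in_conv_hull_points t _) _; apply: zero_in_conv_ext => i.
  by rewrite mulmx_rev_cone_ray.
congr (P _); apply/funext => w; apply/propext.
apply: iff_sym; apply: iff_trans (ker_meets_g_image _ _ _ _) _.
exact: ker_meets_closure_cone.
Qed.
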